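(* Let $D$ be a centrally finite division algebra and let $R=D[t_1,\ldots,t_n]$ be the ring of polynomials in $n$ central commuting variables over $D$. Then for every finite subset $A$ of $R$, the subring $S=D[A]$ of $R$ generated by $D\cup A$ is centrally normalizable over $D$.
   Context: All rings are associative with unity. A division algebra is centrally finite if it is finite-dimensional over its center. A ring $S$ containing $D$ is finite over a subring $R'$ if $S$ is finitely generated as a left $R'$-module. Commuting elements $a_1,\ldots,a_m\in S$ are (left) algebraically independent over $D$ if the monomials $a_1^{i_1}\cdots a_m^{i_m}$ are left linearly independent over $D$. $S$ is centrally normalizable over $D$ if there exist $m\ge0$ and commuting elements $a_1,\ldots,a_m\in S$ with $a_ib=ba_i$ for all $b\in D$, which are left algebraically independent over $D$, and such that $S$ is finite over the subring $D[a_1,\ldots,a_m]$ generated by $D\cup\{a_1,\ldots,a_m\}$. *)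

From HB Require Import structures.
From mathcomp Require Import all_boot all_algebra.
From mathcomp Require Import mpoly.
Set Implicit Arguments. Unset Strict Implicit. Unset Printing Implicit Defensive.
Import GRing.Theory.
Local Open Scope ring_scope.

Definition central (R : ringType) (x : R) : Prop := forall y : R, x * y = y * x.

Definition division_ring (D : unitRingType) : Prop :=
  forall x : D, x != 0 -> x \is a GRing.unit.

(* D is finite-dimensional over its center Z(D): finitely many elements span D
   as a (left) Z(D)-vector space *)
Definition centrally_finite (D : unitRingType) : Prop :=
  exists s : seq D, forall x : D,
    exists c : 'I_(size s) -> D, (forall i, central (c i)) /\
      x = \sum_(i < size s) c i * s`_i.

Inductive gen_subring (R : ringType) (X : R -> Prop) : R -> Prop :=
| gs_gen x : X x -> gen_subring X x
| gs_one : gen_subring X 1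
| gs_add x y : gen_subring X x -> gen_subring X y -> gen_subring X (x + y)
| gs_opp x : gen_subring X x -> gen_subring X (- x)
| gs_mul x y : gen_subring X x -> gen_subring X y -> gen_subring X (x * y).

Definition DAdj (D : ringType) (n : nat) (X : {mpoly D[n]} -> Prop) :
  {mpoly D[n]} -> Prop :=
  gen_subring (fun x => (exists d : D, x = d%:MP) \/ X x).

(* S is finite over the subring R' : S is finitely generated as a left R'-module *)
Definition finite_over (R : ringType) (S R' : R -> Prop) : Prop :=
  exists s : seq R, (forall x, x \in s -> S x) /\
    forall x, S x -> exists r : 'I_(size s) -> R,
      (forall i, R' (r i)) /\ x = \sum_(i < size s) r i * s`_i.

Definition monom (R : ringType) (m : nat) (a : 'I_m -> R) (e : 'X_{1..m}) : R :=
  \prod_(i < m) a i ^+ e i.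

Definition alg_indep (D : ringType) (n m : nat) (a : 'I_m -> {mpoly D[n]}) : Prop :=
  forall (s : seq 'X_{1..m}) (c : 'X_{1..m} -> D), uniq s ->
    \sum_(e <- s) (c e)%:MP * monom a e = 0 -> forall e, e \in s -> c e = 0.

Definition centrally_normalizable (D : ringType) (n : nat)
  (S : {mpoly D[n]} -> Prop) : Prop :=
  exists (m : nat) (a : 'I_m -> {mpoly D[n]}),
    [/\ forall i, S (a i),
        forall i j, a i * a j = a j * a i,
        forall i (b : D), a i * b%:MP = b%:MP * a i,
        alg_indep a &
        finite_over S (DAdj (fun x => exists i, x = a i))].

From HB Require Import structures.
From mathcomp Require Import all_boot all_algebra.
From mathcomp Require Import mpoly.
From Stdlib Require Import Classical.
Set Implicit Arguments. Unset Strict Implicit. Unset Printing Implicit Defensive.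
Import GRing.Theory.
Local Open Scope ring_scope.

(* Let Z be the centre of D.  Expanding every coefficient of x in a finite
   Z-spanning set of D writes x as a left D-combination of polynomials with
   coefficients in Z.  When x lies in S = D[A] the terms can be taken in S: if
   two coefficients of a shortest combination have a non-central ratio,
   commuting with a suitable constant yields a shorter combination lying in S
   which eliminates one of the terms.  Hence S = D[b_1, ..., b_k] with every
   b_i central in D[t_1, ..., t_n].  For central generators Noether
   normalization works as over a field: if the monomials in the b_i are
   D-linearly dependent, Nagata's substitution b_i = z_i + b_1^(N^i) turns a
   relation into a polynomial in b_1 whose top coefficient is a nonzero, hence
   invertible, element of D; so S is finite over D[z_2, ..., z_k], and one
   concludes by induction on k. *)

Section Central.
Variable T : nzRingType.
Implicit Types x y : T.

Lemma central0 : central (0 : T). Proof. by move=> y; rewrite mul0r mulr0. Qed.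

Lemma central1 : central (1 : T). Proof. by move=> y; rewrite mul1r mulr1. Qed.

Lemma centralD x y : central x -> central y -> central (x + y).
Proof. by move=> cx cy z; rewrite mulrDl mulrDr cx cy. Qed.

Lemma centralN x : central x -> central (- x).
Proof. by move=> cx z; rewrite mulNr mulrN cx. Qed.

Lemma centralB x y : central x -> central y -> central (x - y).
Proof. by move=> cx cy; apply/centralD/centralN. Qed.

Lemma centralM x y : central x -> central y -> central (x * y).
Proof. by move=> cx cy z; rewrite -mulrA cy mulrA cx mulrA. Qed.

Lemma centralX x k : central x -> central (x ^+ k).
Proof.
move=> cx; elim: k => [|k IHk]; first by rewrite expr0; apply: central1.
by rewrite exprS; apply: centralM.
Qed.

End Central.

Section LeftSpan.
Variable T : nzRingType.
Implicit Types (H V : T -> Prop) (x : T).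

Inductive lspan H V : T -> Prop :=
| lspan0 : lspan H V 0
| lspan_cons h v x : H h -> V v -> lspan H V x -> lspan H V (h * v + x).

Lemma lspanD H V x y : lspan H V x -> lspan H V y -> lspan H V (x + y).
Proof.
elim=> {x} [|h v x Hh Vv _ IHx] Ly; first by rewrite add0r.
by rewrite -addrA; constructor => //; apply: IHx.
Qed.

Lemma lspanN H V x : (forall h, H h -> H (- h)) -> lspan H V x -> lspan H V (- x).
Proof.
move=> HN; elim=> {x} [|h v x Hh Vv _ IHx]; first by rewrite oppr0; constructor.
by rewrite opprD -mulNr; constructor => //; apply: HN.
Qed.

Lemma lspanMl H V h x : (forall h h', H h -> H h' -> H (h * h')) ->
  H h -> lspan H V x -> lspan H V (h * x).
Proof.
move=> HM Hh; elim=> {x} [|h' v x Hh' Vv _ IHx]; first by rewrite mulr0; constructor.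
by rewrite mulrDr mulrA; constructor => //; apply: HM.
Qed.

Lemma lspan_gen H V v : H 1 -> V v -> lspan H V v.
Proof. by move=> H1 Vv; rewrite -[v]addr0 -[v]mul1r; do !constructor. Qed.

Lemma lspan_sub H V V' x : (forall v, V v -> V' v) -> lspan H V x -> lspan H V' x.
Proof. by move=> VV'; elim=> {x} [|h v x Hh /VV' Vv _ IHx]; constructor. Qed.

Lemma lspan_trans H K U V x : (forall h, H h -> lspan K U h) -> lspan H V x ->
  lspan K (fun w => exists2 u, U u & exists2 v, V v & w = u * v) x.
Proof.
move=> HK; elim=> {x} [|h v x /HK Kh Vv _ IHx]; first by constructor.
apply: lspanD => //; elim: Kh => [|k u h' Kk Uu _ IHh]; first by rewrite mul0r; constructor.
by rewrite mulrDl -mulrA; constructor => //; exists u => //; exists v.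
Qed.

Lemma lspan_finite H V x :
  lspan H V x -> exists2 s : seq T, (forall v, v \in s -> V v) & lspan H (fun v => v \in s) x.
Proof.
elim=> {x} [|h v x Hh Vv _ [s sV Sx]]; first by exists [::]; last constructor.
exists (v :: s); first by move=> w; rewrite inE => /predU1P [->|/sV].
by constructor; rewrite ?mem_head //; apply: lspan_sub Sx => w ws; rewrite inE ws orbT.
Qed.

Lemma lspan_finite_seq H V (A : seq T) :
  (forall a, a \in A -> lspan H V a) ->
  exists2 B : seq T, (forall b, b \in B -> V b) &
    forall a, a \in A -> lspan H (fun v => v \in B) a.
Proof.
elim: A => [|a A IHA] AV; first by exists [::].
have [B BV AB] : exists2 B : seq T, (forall b, b \in B -> V b) &
    forall x, x \in A -> lspan H (fun v => v \in B) x.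
  by apply: IHA => x xA; apply: AV; rewrite inE xA orbT.
have [B' B'V aB'] := lspan_finite (AV a (mem_head a A)).
exists (B' ++ B) => [b|x]; first by rewrite mem_cat => /orP [/B'V|/BV].
rewrite inE => /predU1P [->|/AB Bx].
  by apply: lspan_sub aB' => v; rewrite mem_cat => ->.
by apply: lspan_sub Bx => v; rewrite mem_cat => ->; rewrite orbT.
Qed.

End LeftSpan.

Section GenSubring.
Variables (T : nzRingType) (X : T -> Prop).
Local Notation G := (gen_subring X).

Lemma gen_subring0 : G 0.
Proof. by rewrite -(subrr (1 : T)); apply: gs_add; [|apply: gs_opp]; apply: gs_one. Qed.

Lemma gen_subringB x y : G x -> G y -> G (x - y).
Proof. by move=> Gx Gy; apply/gs_add/gs_opp. Qed.

Lemma gen_subringX x k : G x -> G (x ^+ k).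
Proof.
move=> Gx; elim: k => [|k IHk]; first by rewrite expr0; apply: gs_one.
by rewrite exprS; apply: gs_mul.
Qed.

Lemma gen_subring_sum (I : eqType) (r : seq I) (F : I -> T) :
  (forall i, i \in r -> G (F i)) -> G (\sum_(i <- r) F i).
Proof.
by move=> GF; rewrite big_seq; apply: big_ind => //; [apply: gen_subring0 | apply: gs_add].
Qed.

Lemma gen_subring_trans (Y : T -> Prop) x :
  (forall y, X y -> gen_subring Y y) -> G x -> gen_subring Y x.
Proof.
move=> XY; elim=> {x} [x /XY //||x y _ Gx _ Gy|x _ Gx|x y _ Gx _ Gy].
- exact: gs_one.
- exact: gs_add.
- exact: gs_opp.
- exact: gs_mul.
Qed.

Lemma gen_subring_lspan (H V : T -> Prop) x :
  (forall h, H h -> G h) -> (forall v, V v -> G v) ->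
  lspan H V x -> G x.
Proof.
move=> HG VG; elim=> {x} [|h v x Hh Vv _ Gx]; first exact: gen_subring0.
by apply: gs_add => //; apply: gs_mul; [apply: HG | apply: VG].
Qed.

End GenSubring.

Section FiniteOver.
Variable T : nzRingType.
Implicit Types (S M H : T -> Prop) (s : seq T).

Lemma lspan_sum_coef H s (r : 'I_(size s) -> T) :
  (forall i, H (r i)) -> lspan H (fun v => v \in s) (\sum_(i < size s) r i * s`_i).
Proof.
move=> Hr; apply: (big_ind (lspan H _)); [exact: lspan0 | exact: lspanD |].
by move=> i _; rewrite -[_ * _]addr0; constructor; rewrite ?mem_nth //; constructor.
Qed.

Lemma lspan_coef H s x : H 0 -> (forall h h', H h -> H h' -> H (h + h')) ->
  lspan H (fun v => v \in s) x ->
  exists r : 'I_(size s) -> T, (forall i, H (r i)) /\ x = \sum_(i < size s) r i * s`_i.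
Proof.
move=> H0 HD; elim=> {x} [|h v x Hh vs _ [r [Hr ->]]].
  by exists (fun=> 0); split => //; rewrite big1 // => i _; rewrite mul0r.
pose j := Ordinal (etrans (index_mem v s) vs).
exists (fun i => r i + (if i == j then h else 0)); split.
  by move=> i; apply: HD => //; case: (i == j).
rewrite (bigD1 j) //= [RHS](bigD1 j) //= eqxx nth_index // mulrDl addrCA addrA.
by congr (_ + _); apply: eq_bigr => i /negbTE ->; rewrite addr0.
Qed.

Lemma finite_overP S H : H 0 -> (forall h h', H h -> H h' -> H (h + h')) ->
  finite_over S H <->
  exists2 s : seq T, (forall v, v \in s -> S v) & forall x, S x -> lspan H (fun v => v \in s) x.
Proof.
move=> H0 HD; split=> [[s [sS Scoef]]|[s sS Sspan]].
  by exists s => // x /Scoef [r [Hr ->]]; apply: lspan_sum_coef.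
by exists s; split=> // x /Sspan; apply: lspan_coef.
Qed.

Lemma finite_over_trans S M H :
  (forall x y, S x -> S y -> S (x * y)) -> (forall x, M x -> S x) ->
  H 0 -> (forall h h', H h -> H h' -> H (h + h')) ->
  finite_over S M -> finite_over M H -> finite_over S H.
Proof.
move=> SM MS H0 HD [t [tS Scoef]] /(finite_overP _ H0 HD) [u uM Mspan].
apply/(finite_overP _ H0 HD); exists [seq a * b | a <- u, b <- t].
  by move=> _ /allpairsP [[a b] [/= /uM/MS Sa /tS Sb ->]]; apply: SM.
move=> x /Scoef [r [Mr ->]]; apply: lspan_sub (lspan_trans Mspan (lspan_sum_coef Mr)).
by move=> _ [a au [b bt ->]]; apply: allpairs_f.
Qed.

End FiniteOver.

Section PolyOver.
Variables (T : nzRingType) (X : T -> Prop).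
Local Notation G := (gen_subring X).

Definition poly_over (p : {poly T}) := forall j, G p`_j.

Lemma poly_overC c : G c -> poly_over c%:P.
Proof. by move=> Gc j; rewrite coefC; case: (j == 0)%N => //; apply: gen_subring0. Qed.

Lemma poly_overXn k : poly_over 'X^k.
Proof. by move=> j; rewrite coefXn; case: (j == k); [apply: gs_one | apply: gen_subring0]. Qed.

Lemma poly_overD p q : poly_over p -> poly_over q -> poly_over (p + q).
Proof. by move=> Gp Gq j; rewrite coefD; apply: gs_add. Qed.

Lemma poly_overM p q : poly_over p -> poly_over q -> poly_over (p * q).
Proof. by move=> Gp Gq j; rewrite coefM; apply: gen_subring_sum => i _; apply: gs_mul. Qed.

Lemma poly_overZ c p : G c -> poly_over p -> poly_over (c *: p).
Proof. by move=> Gc Gp j; rewrite coefZ; apply: gs_mul. Qed.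

Lemma poly_overX p k : poly_over p -> poly_over (p ^+ k).
Proof.
move=> Gp; elim: k => [|k IHk]; last by rewrite exprS; apply: poly_overM.
by rewrite expr0 -polyC1; apply/poly_overC/gs_one.
Qed.

Lemma poly_over_prod (I : eqType) (r : seq I) (F : I -> {poly T}) :
  (forall i, i \in r -> poly_over (F i)) -> poly_over (\prod_(i <- r) F i).
Proof.
move=> GF; rewrite big_seq; apply: big_ind => //; last exact: poly_overM.
by rewrite -polyC1; apply/poly_overC/gs_one.
Qed.

Lemma poly_over_sum (I : eqType) (r : seq I) (F : I -> {poly T}) :
  (forall i, i \in r -> poly_over (F i)) -> poly_over (\sum_(i <- r) F i).
Proof.
move=> GF; rewrite big_seq; apply: big_ind => //; last exact: poly_overD.
by rewrite -polyC0; apply/poly_overC/gen_subring0.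
Qed.

End PolyOver.

Section MonicPoly.
Variable T : nzRingType.

Lemma size_monicX (p : {poly T}) k : p \is monic ->
  size (p ^+ k) = ((size p).-1 * k).+1.
Proof.
move=> mp; elim: k => [|k IHk]; first by rewrite expr0 size_poly1 muln0.
have sp : (0 < size p)%N by rewrite size_poly_gt0 monic_neq0.
rewrite exprS size_monicM ?monic_neq0 ?monic_exp // IHk mulnS addnS /=.
by rewrite -{1}(prednK sp) addSn.
Qed.

Lemma size_monic_prod (I : Type) (r : seq I) (F : I -> {poly T}) :
  (forall i, F i \is monic) ->
  size (\prod_(i <- r) F i) = (\sum_(i <- r) (size (F i)).-1).+1.
Proof.
move=> mF; elim: r => [|i r IHr]; first by rewrite !big_nil size_poly1.
have sp : (0 < size (F i))%N by rewrite size_poly_gt0 monic_neq0.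
rewrite !big_cons size_monicM ?monic_neq0 ?monic_prod // IHr addnS /=.
by rewrite -{1}(prednK sp) addSn.
Qed.

Lemma coef_sum_monic_top (I : eqType) (s : seq I) (a : I -> T) (q : I -> {poly T}) e0 :
    uniq s -> e0 \in s -> (forall e, q e \is monic) ->
    {in s &, forall e e', size (q e) = size (q e') -> e = e'} ->
    (forall e, e \in s -> a e != 0 -> (size (q e) <= size (q e0))%N) ->
  forall j, ((size (q e0)).-1 <= j)%N ->
  (\sum_(e <- s) a e *: q e)`_j = if j == (size (q e0)).-1 then a e0 else 0.
Proof.
move=> us e0s mq qinj qmax j le_j.
have sq e : size (q e) = (size (q e)).-1.+1 by rewrite prednK // size_poly_gt0 monic_neq0.
rewrite coef_sum (bigD1_seq e0) //= big1_seq ?addr0 => [|e /andP [ne0 es]]; last first.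
  rewrite coefZ; have [->|ae] := eqVneq (a e) 0; first by rewrite mul0r.
  have lt_e : (size (q e) < size (q e0))%N.
    by rewrite ltn_neqAle qmax ?andbT //; apply: contra ne0 => /eqP/qinj ->.
  by rewrite nth_default ?mulr0 // (leq_trans _ le_j) // -ltnS -sq.
rewrite coefZ; case: eqP => [->|ne_j].
  by move/monicP: (mq e0); rewrite lead_coefE => ->; rewrite mulr1.
by rewrite nth_default ?mulr0 // (sq e0) ltn_neqAle le_j andbT eq_sym; apply/eqP.
Qed.

Lemma root_integral_relation (Q : {poly T}) (y u : T) W :
  (size Q <= W.+1)%N -> u * Q`_W = 1 -> Q.[y] = 0 ->
  y ^+ W = \sum_(j < W) - (u * Q`_j) * y ^+ j.
Proof.
move=> sQ uQ /(congr1 (fun t => u * t)).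
rewrite (horner_coef_wide _ sQ) big_ord_recr /= mulr0 mulrDr mulrA uQ mul1r.
move/eqP; rewrite addrC addr_eq0 => /eqP ->; rewrite big_distrr -sumrN /=.
by apply: eq_bigr => j _; rewrite mulrA mulNr.
Qed.

End MonicPoly.

Lemma digits_inj (N k : nat) (f g : 'I_k -> nat) :
  (forall i, f i < N)%N -> (forall i, g i < N)%N ->
  (\sum_(i < k) f i * N ^ i = \sum_(i < k) g i * N ^ i)%N -> f =1 g.
Proof.
elim: k f g => [|k IHk] f g fN gN; first by move=> _ [].
have shift (h : 'I_k.+1 -> nat) : (\sum_(i < k.+1) h i * N ^ i =
    h ord0 + N * \sum_(i < k) h (lift ord0 i) * N ^ i)%N.
  rewrite big_ord_recl expn0 muln1 big_distrr /=; congr (_ + _)%N.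
  by apply: eq_bigr => i _; rewrite /bump /= add1n expnS mulnCA.
rewrite !shift => eq_fg.
have eq0 : f ord0 = g ord0.
  by move: (congr1 (modn^~ N) eq_fg); rewrite !(addnC (_ ord0)) !(mulnC N) !modnMDl !modn_small.
move: eq_fg; rewrite eq0 => /addnI /eqP; rewrite eqn_mul2l => /orP [/eqP N0|/eqP eq_lift].
  by move: (fN ord0); rewrite N0.
move=> i; case: (unliftP ord0 i) => [j ->|-> //].
exact: (IHk (fun j => f (lift ord0 j)) (fun j => g (lift ord0 j))).
Qed.

Lemma seq_arg_max (I : eqType) (P : pred I) (F : I -> nat) (s : seq I) i0 :
  i0 \in s -> P i0 ->
  exists2 i, (i \in s) && P i & forall j, j \in s -> P j -> (F j <= F i)%N.
Proof.
move=> i0s Pi0; pose hasF w := has (fun j => P j && (F j == w)) s.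
have exF : exists w, hasF w by exists (F i0); apply/hasP; exists i0; rewrite ?Pi0 ?eqxx.
have ubF w : hasF w -> (w <= \max_(j <- s) F j)%N.
  by case/hasP=> j js /andP [_ /eqP <-]; apply: leq_bigmax_seq.
case: (ex_maxnP exF ubF) => _ /hasP [i si /andP [Pi /eqP <-]] maxF.
exists i => [|j js Pj]; first by rewrite si Pi.
by apply: maxF; apply/hasP; exists j; rewrite ?Pj ?eqxx.
Qed.

Section IntegralElement.
Variables (T : nzRingType) (X : T -> Prop) (y : T) (W : nat) (h : nat -> T).
Hypotheses (cy : central y) (Gh : forall j, gen_subring X (h j))
  (yW : y ^+ W = \sum_(j < W) h j * y ^+ j).
Local Notation G := (gen_subring X).
Local Notation P := (lspan G (fun v => v \in [seq y ^+ j | j <- iota 0 W])).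

Let GM g g' : G g -> G g' -> G (g * g'). Proof. exact: gs_mul. Qed.

Lemma lspan_pow_gen g j : G g -> (j < W)%N -> P (g * y ^+ j).
Proof.
move=> Gg ltjW; rewrite -[_ * _]addr0; constructor => //; last by constructor.
by apply: map_f; rewrite mem_iota.
Qed.

Lemma lspan_pow_top : P (y ^+ W).
Proof.
by rewrite yW; apply: big_ind => [||j _]; [constructor | apply: lspanD | apply: lspan_pow_gen].
Qed.

Lemma lspan_powMy x : P x -> P (x * y).
Proof.
elim=> {x} [|g v x Gg /mapP [j]]; first by rewrite mul0r; constructor.
rewrite mem_iota add0n => /andP [_ ltjW] -> _ Px; rewrite mulrDl; apply: lspanD => //.
rewrite -mulrA -exprSr; have [ltjW'|geW] := ltnP j.+1 W; first exact: lspan_pow_gen.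
have -> : j.+1 = W by apply/eqP; rewrite eqn_leq ltjW geW.
exact: lspanMl GM Gg lspan_pow_top.
Qed.

Lemma lspan_powX j : P (y ^+ j).
Proof.
elim: j => [|j IHj]; last by rewrite exprSr; apply: lspan_powMy.
case: (posnP W) => [W0|W_gt0]; first by move: lspan_pow_top; rewrite W0.
by rewrite -[y ^+ 0]mul1r; apply: lspan_pow_gen => //; apply: gs_one.
Qed.

Lemma lspan_powM x x' : P x -> P x' -> P (x * x').
Proof.
elim=> {x} [|g v x Gg /mapP [i _ ->] _ IHx] Px'; first by rewrite mul0r; constructor.
rewrite mulrDl; apply: lspanD; last exact: IHx.
rewrite -mulrA; apply: lspanMl => //.
elim: Px' => [|g' v' w Gg' /mapP [j _ ->] _ IHw]; first by rewrite mulr0; constructor.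
rewrite mulrDr mulrA (centralX i cy g') -mulrA -exprD.
by apply: lspanD => //; apply: lspanMl => //; apply: lspan_powX.
Qed.

Lemma gen_subring_integral x : gen_subring (fun x => X x \/ x = y) x -> P x.
Proof.
elim=> {x} [x [Xx|->]||x x' _ Px _ Px'|x _ Px|x x' _ Px _ Px'].
- by rewrite -[x]mulr1 -(expr0 y); apply: lspanMl (lspan_powX 0) => //; apply: gs_gen.
- by rewrite -(expr1 y); apply: lspan_powX.
- by rewrite -(expr0 y); apply: lspan_powX.
- exact: lspanD.
- by apply: lspanN => // g; apply: gs_opp.
- exact: lspan_powM.
Qed.

End IntegralElement.

Section CentralCoeffs.
Variables (D : nzRingType) (n : nat).
Local Notation R := {mpoly D[n]}.

Definition central_coeffs (p : R) := forall m, central p@_m.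

Lemma mpolyC_central c : central c -> central (c%:MP : R).
Proof.
move=> cc q; rewrite (mpolyE q) big_distrr big_distrl /=.
apply: eq_bigr => m _; rewrite -!mul_mpolyC mulrA -mpolyCM cc mpolyCM -!mulrA.
by rewrite commr_mpolyX.
Qed.

Lemma central_coeffs_central p : central_coeffs p -> central p.
Proof.
move=> cp q; rewrite (mpolyE p) big_distrr big_distrl /=.
apply: eq_bigr => m _; rewrite -!mul_mpolyC -mulrA -(commr_mpolyX m q) mulrA.
by rewrite (mpolyC_central (cp m)) mulrA.
Qed.

Definition dcomb (f : D * R -> D) (l : seq (D * R)) : R :=
  \sum_(p <- l) (f p)%:MP * p.2.

Lemma dcomb_cons f p l : dcomb f (p :: l) = (f p)%:MP * p.2 + dcomb f l.
Proof. exact: big_cons. Qed.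

Lemma eq_dcomb f g l : (forall p, p \in l -> f p = g p) -> dcomb f l = dcomb g l.
Proof. by move=> fg; rewrite /dcomb !big_seq; apply: eq_bigr => p /fg ->. Qed.

Lemma dcombMl a f l : a%:MP * dcomb f l = dcomb (fun p => a * f p) l.
Proof. by rewrite /dcomb big_distrr; apply: eq_bigr => p _ /=; rewrite mulrA -mpolyCM. Qed.

Lemma dcombMr a f l : (forall p, p \in l -> central_coeffs p.2) ->
  dcomb f l * a%:MP = dcomb (fun p => f p * a) l.
Proof.
move=> ccl; rewrite /dcomb big_distrl /= !big_seq; apply: eq_bigr => p pl.
by rewrite -mulrA (central_coeffs_central (ccl p pl)) mulrA -mpolyCM.
Qed.

Lemma dcombB f g l : dcomb f l - dcomb g l = dcomb (fun p => f p - g p) l.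
Proof.
by rewrite /dcomb -sumrB; apply: eq_bigr => p _; rewrite mpolyCB mulrBl.
Qed.

Lemma dcomb_rem f q l : q \in l -> f q = 0 -> dcomb f l = dcomb f (rem q l).
Proof.
by move=> ql fq0; rewrite /dcomb (perm_big _ (perm_to_rem ql)) big_cons /= fq0 mpolyC0 mul0r add0r.
Qed.

Lemma central_coeffs_dcomb f l : (forall p, p \in l -> central (f p)) ->
  (forall p, p \in l -> central_coeffs p.2) -> central_coeffs (dcomb f l).
Proof.
move=> cf ccl m; rewrite /dcomb raddf_sum /= big_seq.
apply: (big_ind (@central D)); [exact: central0 | exact: centralD |].
by move=> p pl; rewrite mcoeffCM; apply: centralM; [apply: cf | apply: ccl].
Qed.

End CentralCoeffs.

Section Adjunction.
Variables (D : nzRingType) (n : nat) (X : {mpoly D[n]} -> Prop).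

Lemma DAdjC d : DAdj X d%:MP.
Proof. by apply: gs_gen; left; exists d. Qed.

Lemma DAdj_gen x : X x -> DAdj X x.
Proof. by move=> Xx; apply: gs_gen; right. Qed.

End Adjunction.

Section Decomposition.
Variables (D : unitRingType) (n : nat) (X : {mpoly D[n]} -> Prop).
Hypothesis hdiv : division_ring D.
Local Notation R := {mpoly D[n]}.
Local Notation S := (DAdj X).
Local Notation const := (fun x : R => exists d : D, x = d%:MP).
Local Notation cspan := (lspan const (fun w => S w /\ central_coeffs w)).

Lemma cspanMl a x : cspan x -> cspan (a%:MP * x).
Proof. by apply: lspanMl => [_ _ [d ->] [d' ->]|]; [exists (d * d'); rewrite mpolyCM | exists a]. Qed.

Lemma cspan_DAdj x : cspan x -> S x.
Proof. by apply: gen_subring_lspan => [_ [d ->]|v []//]; apply: DAdjC. Qed.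

Lemma cspan_dcomb k : forall (l : seq (D * R)) f, (size l <= k)%N ->
  (forall p, p \in l -> central_coeffs p.2) -> S (dcomb f l) -> cspan (dcomb f l).
Proof.
elim: k => [|k IHk] [|p0 ls] f //= size_l ccl Sx; try by rewrite /dcomb big_nil; constructor.
set l := p0 :: ls in ccl Sx *.
have ccls p : p \in ls -> central_coeffs p.2 by move=> pls; apply: ccl; rewrite inE pls orbT.
have [f0|f0_neq0] := eqVneq (f p0) 0.
  by move: Sx; rewrite /l dcomb_cons f0 mpolyC0 mul0r add0r; apply: IHk.
have f0_unit : f p0 \is a GRing.unit by apply: hdiv.
pose e p := (f p0)^-1 * f p.
have Se : S (dcomb e l) by rewrite -dcombMl; apply/gs_mul/Sx/DAdjC.
have [e_central|] := classic (forall p, p \in l -> central (e p)).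
  rewrite (eq_dcomb (g := fun p => f p0 * e p)) => [|p _]; last by rewrite mulrA divrr ?mul1r.
  rewrite -dcombMl; apply/cspanMl/lspan_gen; first by exists 1.
  by split=> //; apply: central_coeffs_dcomb.
(* Commuting with d kills the p0-term; the shorter combination [dcomb cf ls]
   then serves to eliminate the q-term. *)
move=> /not_all_ex_not [q /(imply_to_and (q \in l)) [ql /not_all_ex_not [d /eqP nc]]].
pose cf p := d * e p - e p * d.
have cf0 : cf p0 = 0 by rewrite /cf /e mulVr // mulr1 mul1r subrr.
have cf_l : dcomb cf l = dcomb cf ls by rewrite /l dcomb_cons cf0 mpolyC0 mul0r add0r.
have q_ls : q \in ls.
  by move: ql; rewrite inE => /predU1P [qp0|//]; case/eqP: nc; rewrite qp0 /e mulVr // mulr1 mul1r.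
have z_cspan : cspan (dcomb cf ls).
  apply: IHk => //; have -> : dcomb cf ls = d%:MP * dcomb e l - dcomb e l * d%:MP.
    by rewrite -cf_l dcombMl dcombMr // dcombB.
  by apply: gen_subringB; apply: gs_mul => //; apply: DAdjC.
have c_unit : cf q \is a GRing.unit by apply: hdiv; rewrite /cf subr_eq0 eq_sym.
pose g p := f p - f q * (cf q)^-1 * cf p.
have g_rem : dcomb g (rem q l) = dcomb f l - (f q * (cf q)^-1)%:MP * dcomb cf ls.
  by rewrite -dcomb_rem // /g ?divrK ?subrr // -cf_l dcombMl dcombB.
rewrite -[dcomb f l](subrK ((f q * (cf q)^-1)%:MP * dcomb cf ls)) -g_rem addrC.
apply: lspanD; first exact: cspanMl.
apply: IHk; rewrite ?size_rem //; first by move=> p /mem_rem; apply: ccl.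
by rewrite g_rem; apply: gen_subringB => //; apply/gs_mul/cspan_DAdj/z_cspan/DAdjC.
Qed.

Hypothesis hcf : centrally_finite D.

Lemma dcomb_central_coeffs (x : R) : exists l : seq (D * R),
  (forall p, p \in l -> central_coeffs p.2) /\ x = dcomb fst l.
Proof.
have [s s_span] := hcf.
suff [l [ccl el]] : exists l : seq (D * R), (forall p, p \in l -> central_coeffs p.2) /\
    \sum_(m <- msupp x) x@_m *: 'X_[m] = dcomb fst l by exists l; rewrite -el -mpolyE.
elim: (msupp x) => [|m r [l [ccl el]]]; first by exists [::]; split => //; rewrite /dcomb !big_nil.
rewrite big_cons el; have [c [cc ->]] := s_span x@_m.
exists ([seq (s`_i, (c i)%:MP * 'X_[m]) | i : 'I_(size s) <- enum 'I_(size s)] ++ l); split.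
  move=> p; rewrite mem_cat => /orP [/mapP [i _ ->] m'|/ccl //].
  rewrite mcoeffCM mcoeffX; apply: centralM; first exact: cc.
  by case: (m == m'); [apply: central1 | apply: central0].
rewrite /dcomb big_cat /= big_map big_enum /= -mul_mpolyC raddf_sum big_distrl /=.
by congr (_ + _); apply: eq_bigr => i _; rewrite mulrA -mpolyCM cc mpolyCM -mulrA.
Qed.

Lemma DAdj_cspan x : S x -> cspan x.
Proof.
have [l [ccl ->]] := dcomb_central_coeffs x.
exact: cspan_dcomb (leqnn (size l)) ccl.
Qed.

End Decomposition.

Section Noether.
Variables (D : unitRingType) (n : nat).
Hypothesis hdiv : division_ring D.
Local Notation R := {mpoly D[n]}.
Local Notation G b := (DAdj (fun x => exists i, x = b i)).

Lemma DAdj_range k (b : 'I_k -> R) i : G b (b i).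
Proof. by apply: DAdj_gen; exists i. Qed.

Definition nagata_shift k N (b : 'I_k.+1 -> R) (i : 'I_k) : R :=
  b (lift ord0 i) - b ord0 ^+ (N ^ lift ord0 i).

Section NagataTrick.
Variables (k N : nat) (b : 'I_k.+1 -> R) (s : seq 'X_{1..k.+1}) (c : 'X_{1..k.+1} -> D).
Hypotheses (cb : forall i, central (b i)) (us : uniq s)
  (rel : \sum_(e <- s) (c e)%:MP * monom b e = 0)
  (N_gt0 : (0 < N)%N) (ltN : forall e i, e \in s -> (e i < N)%N).

Let y := b ord0.
Let z i := b i - y ^+ (N ^ i).
Let phi (i : 'I_k.+1) : {poly R} := 'X^(N ^ i) + (z i)%:P.
Let q (e : 'X_{1..k.+1}) := \prod_(i < k.+1) phi i ^+ e i.
Let wt (e : 'X_{1..k.+1}) := (\sum_(i < k.+1) e i * N ^ i)%N.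
Let Q := \sum_(e <- s) (c e)%:MP *: q e.

Let phi_monic i : phi i \is monic.
Proof. by apply: monicXnaddC; rewrite expn_gt0 N_gt0. Qed.

Let q_monic e : q e \is monic.
Proof. by apply: monic_prod => i _; apply/monic_exp/phi_monic. Qed.

Let size_q e : size (q e) = (wt e).+1.
Proof.
rewrite size_monic_prod => [|i]; last exact/monic_exp/phi_monic.
congr _.+1; apply: eq_bigr => i _.
by rewrite size_monicX ?phi_monic // size_XnaddC ?expn_gt0 ?N_gt0 // mulnC.
Qed.

Let wt_inj : {in s &, injective wt}.
Proof. by move=> e e' es e's /digits_inj eq_ee'; apply/mnmP/eq_ee' => i; apply: ltN. Qed.

Let horner_q e : (q e).[y] = monom b e.
Proof.
have comm_y (p : {poly R}) : comm_poly p y by rewrite /comm_poly cb.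
apply: (big_ind2 (fun (p : {poly R}) x => p.[y] = x)) => [|p x p' x' <- <-|i _].
- exact: hornerC.
- exact: hornerM_comm.
by rewrite horner_exp_comm // hornerD hornerC hornerXn /z addrC subrK.
Qed.

Let Q_root : Q.[y] = 0.
Proof. by rewrite -rel horner_sum; apply: eq_bigr => e _; rewrite hornerZ horner_q. Qed.

Let Q_over : poly_over (fun x => (exists d : D, x = d%:MP) \/ exists i, x = nagata_shift N b i) Q.
Proof.
apply: poly_over_sum => e _; apply: poly_overZ; first exact: DAdjC.
apply: poly_over_prod => i _; apply/poly_overX/poly_overD; first exact: poly_overXn.
apply: poly_overC; case: (unliftP ord0 i) => [j ->|->]; first by apply: DAdj_range.
by rewrite /z expn0 expr1 subrr; apply: gen_subring0.
Qed.

Lemma nagata_integral e0 : e0 \in s -> c e0 != 0 ->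
  exists W (h : nat -> R), (forall j, G (nagata_shift N b) (h j)) /\
    b ord0 ^+ W = \sum_(j < W) h j * b ord0 ^+ j.
Proof.
move=> e0s ce0; have [e1 /andP [e1s ce1] e1_max] := seq_arg_max (P := fun e => c e != 0) wt e0s ce0.
have Qtop : forall j, (wt e1 <= j)%N -> Q`_j = if j == wt e1 then (c e1)%:MP else 0.
  have := coef_sum_monic_top (a := fun e => (c e)%:MP) us e1s q_monic; rewrite size_q; apply.
    by move=> e e' es e's; rewrite !size_q => -[/wt_inj]; apply.
  by move=> e es; rewrite mpolyC_eq0 !size_q ltnS; apply: e1_max.
have ce1_unit : c e1 \is a GRing.unit by apply: hdiv.
exists (wt e1), (fun j => - ((c e1)^-1%:MP * Q`_j)); split.
  by move=> j; apply/gs_opp/gs_mul/Q_over; apply: DAdjC.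
apply: root_integral_relation Q_root.
  by apply/leq_sizeP => j lt_j; rewrite Qtop ?(ltnW lt_j) // gtn_eqF.
by rewrite Qtop // eqxx -mpolyCM mulVr ?mpolyC1.
Qed.

End NagataTrick.

Lemma nagata_reduction k (b : 'I_k.+1 -> R) : (forall i, central (b i)) -> ~ alg_indep b ->
  exists z : 'I_k -> R, [/\ forall i, central (z i), forall i, G b (z i) & finite_over (G b) (G z)].
Proof.
move=> cb /not_all_ex_not [s /not_all_ex_not [c dep]].
have [us rel [e0 e0s ce0]] : [/\ uniq s, \sum_(e <- s) (c e)%:MP * monom b e = 0 &
    exists2 e0, e0 \in s & c e0 != 0].
  apply: NNPP => nrel; apply: dep => us rel e0 e0s; apply: NNPP => /eqP ce0.
  by apply: nrel; split => //; exists e0.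
pose N := (\max_(e <- s) mdeg e).+1.
have ltN e i : e \in s -> (e i < N)%N.
  move=> es; rewrite ltnS (leq_trans _ (leq_bigmax_seq _ es erefl)) //.
  by rewrite mdegE (bigD1 i) //= leq_addr.
have [W [h [Gh yW]]] := nagata_integral cb us rel (ltn0Sn _) ltN e0s ce0.
exists (nagata_shift N b); split.
- by move=> i; apply: centralB => //; apply: centralX.
- by move=> i; apply/gen_subringB/gen_subringX; apply: DAdj_range.
apply/finite_overP; [exact: gen_subring0 | by move=> *; apply: gs_add |].
exists [seq b ord0 ^+ j | j <- iota 0 W] => [_ /mapP [j _ ->]|x Gbx].
  exact/gen_subringX/DAdj_range.
apply: (gen_subring_integral (cb ord0) Gh yW).
apply: gen_subring_trans Gbx => _ [[d ->]|[i ->]]; first by apply: gs_gen; left; left; exists d.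
case: (unliftP ord0 i) => [j ->|->]; last by apply: gs_gen; right.
rewrite -[b (lift ord0 j)](subrK (b ord0 ^+ (N ^ lift ord0 j))).
apply: gs_add; first by apply: gs_gen; left; right; exists j.
by apply/gen_subringX/gs_gen; right.
Qed.

Lemma alg_indep_ord0 (b : 'I_0 -> R) : alg_indep b.
Proof.
move=> [|e0 [|e1 s]] c //= us; last by rewrite inE (_ : e0 = e1) ?eqxx // in us; apply/mnmP => -[].
rewrite big_seq1 /monom big_ord0 mulr1 => /eqP; rewrite mpolyC_eq0 => /eqP c0 e.
by rewrite inE => /eqP ->.
Qed.

Lemma alg_indep_normalizable k (b : 'I_k -> R) :
  (forall i, central (b i)) -> alg_indep b -> centrally_normalizable (G b).
Proof.
move=> cb indep; exists k, b; split => //; [exact: DAdj_range | by move=> *; apply: cb ..|].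
exists [:: 1]; split => [_ /[!inE] /eqP -> |x Gx]; first exact: gs_one.
by exists (fun=> x); split => //; rewrite big_ord1 mulr1.
Qed.

Lemma noether_normalization k (b : 'I_k -> R) :
  (forall i, central (b i)) -> centrally_normalizable (G b).
Proof.
elim: k b => [|k IHk] b cb; first exact/alg_indep_normalizable/alg_indep_ord0.
have [|dep] := classic (alg_indep b); first exact: alg_indep_normalizable.
have [z [cz Gbz fin_bz]] := nagata_reduction cb dep.
have [m [a [Ga ac aD indep fin_za]]] := IHk z cz.
exists m, a; split => // [i|].
  by apply: gen_subring_trans (Ga i) => _ [[d ->]|[j ->]]; [exact: DAdjC | exact: Gbz].
apply: finite_over_trans fin_bz fin_za => [x y|x||]; first exact: gs_mul.
- by apply: gen_subring_trans => _ [[d ->]|[j ->]]; [exact: DAdjC | exact: Gbz].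
- exact: gen_subring0.
- by move=> *; apply: gs_add.
Qed.

End Noether.

Lemma centrally_normalizable_eq (D : nzRingType) n (S S' : {mpoly D[n]} -> Prop) :
  (forall x, S x <-> S' x) -> centrally_normalizable S -> centrally_normalizable S'.
Proof.
move=> SS' [m [a [Sa ac aD indep [s [sS Scoef]]]]]; exists m, a.
by split=> // [i|]; [apply/SS' | exists s; split=> [v /sS /SS'|x /SS' /Scoef]].
Qed.

Unset Implicit Arguments.
Theorem proposition4p6 (D : unitRingType) (n : nat)
  (hdiv : division_ring D) (hcf : centrally_finite D)
  (A : seq {mpoly D[n]}) :
  centrally_normalizable (DAdj (fun x => x \in A)).
Proof.
have [B BS AB] := lspan_finite_seq (fun a aA =>
  DAdj_cspan (X := fun x => x \in A) hdiv hcf (DAdj_gen aA)).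
have BSi (i : 'I_(size B)) := BS _ (mem_nth 0 (ltn_ord i)).
apply: centrally_normalizable_eq (noether_normalization hdiv (b := fun i => B`_i) _) => [x|i]; last first.
  exact/central_coeffs_central/(BSi i).2.
split; apply: gen_subring_trans => y [[d ->]|]; try exact: DAdjC.
  by move=> [i ->]; apply: (BSi i).1.
move=> yA; apply: gen_subring_lspan (AB y yA) => [_ [d ->]|v vB]; first exact: DAdjC.
by apply: DAdj_gen; exists (Ordinal (etrans (index_mem v B) vB)); rewrite nth_index.
Qed.
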